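(* Let $(\mathbf{x}_i,y_i)_{i=1}^n\subset\mathbb{R}^d\times\{\pm1\}$ satisfy $\|\mathbf{x}_i\|\le 1$ for all $i$, and suppose there are $\gamma>0$ and a unit vector $\mathbf{w}_*$ with $y_i\mathbf{x}_i^\top\mathbf{w}_*\ge\gamma$ for all $i$. Let $L(\mathbf{w})=\frac1n\sum_{i=1}^n\ln\big(1+\exp(-y_i\mathbf{x}_i^\top\mathbf{w})\big)$ and run gradient descent $\mathbf{w}_t=\mathbf{w}_{t-1}-\eta\nabla L(\mathbf{w}_{t-1})$, $t\ge1$, with an arbitrary constant stepsize $\eta>0$ and $\mathbf{w}_0=0$. Let $F(\mathbf{w}):=\frac1n\sum_{i=1}^n\exp(-y_i\mathbf{x}_i^\top\mathbf{w})$. Then: (1) For every integer $t\ge1$, \[\frac1t\sum_{k=0}^{t-1}L(\mathbf{w}_k)\le\frac{1+\ln^2(\gamma^2\eta t)+\eta^2/4}{\gamma^2\eta t}.\] (2) If $s\ge0$ is such that $L(\mathbf{w}_s)\le 1/\eta$, then $(L(\mathbf{w}_t))_{t\ge s}$ is non-increasing, and for every $t>s$, \[L(\mathbf{w}_t)\le\frac{2F(\mathbf{w}_s)+\ln^2(\gamma^2\eta(t-s))}{\gamma^2\eta(t-s)}.\] (3) Let $\tau:=\frac{60}{\gamma^2}\max\Big\{\eta,\ n,\ e,\ \frac{\eta+n}{\eta}\ln\frac{\eta+n}{\eta}\Big\}$. Then there exists an integer $0\le s\le\tau$ such that $L(\mathbf{w}_s)\le1/\eta$ and $F(\mathbf{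w}_s)\le1$.
   Context: Logistic regression with linearly separable data; $\eta$ may be arbitrarily large (no smoothness-based restriction on the stepsize). *)

From HB Require Import structures.
From mathcomp Require Import all_boot all_order all_algebra.
From mathcomp Require Import all_classical all_reals.
From mathcomp Require Import all_analysis.
Set Implicit Arguments. Unset Strict Implicit. Unset Printing Implicit Defensive.
Import Order.TTheory GRing.Theory Num.Theory.
Local Open Scope ring_scope.

Section Logistic.
Variables (R : realType) (d n : nat).
Variables (x : 'I_n -> 'rV[R]_d) (y : 'I_n -> R).

Definition dotv (u v : 'rV[R]_d) : R := \sum_(j < d) u 0 j * v 0 j.
Definition norm2 (u : 'rV[R]_d) : R := Num.sqrt (dotv u u).

Definition margin (w : 'rV[R]_d) (i : 'I_n) : R := y i * dotv (x i) w.

Definition logistic_loss (w : 'rV[R]_d) : R :=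
  n%:R^-1 * \sum_(i < n) ln (1 + expR (- margin w i)).

Definition exp_loss (w : 'rV[R]_d) : R :=
  n%:R^-1 * \sum_(i < n) expR (- margin w i).

Definition logistic_grad (w : 'rV[R]_d) : 'rV[R]_d :=
  - (n%:R^-1 *: \sum_(i < n) ((y i / (1 + expR (margin w i))) *: x i)).

Fixpoint gd (eta : R) (t : nat) : 'rV[R]_d :=
  match t with
  | O => 0
  | t'.+1 => gd eta t' - eta *: logistic_grad (gd eta t')
  end.

End Logistic.

(* Gradient descent is compared with a point [u]: by convexity of the logistic
   loss, |w_{t+1} - u|^2 <= |w_t - u|^2 + 2 eta (L u - L w_t) + eta^2 |grad L w_t|^2.
   Shifting the comparator by [eta / (2 gamma)] along [wstar] lets the margin pay
   for the second-order term whatever the stepsize, and [u = (phi / gamma) wstar]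
   has [L u <= exp (- phi)]; telescoping gives (1).  Once [eta L w_s <= 1], the
   quadratic upper bound of [z |-> ln (1 + exp (- z))] makes the loss decrease and
   bounds the second-order term by [eta L w_t], so telescoping from [w_s] against
   [w_s + (phi / gamma) wstar] gives (2).  For (3): while the mean sigmoid weight
   stays above [1 / (2 (eta + n))] the margin along [wstar] grows linearly, which
   the distance bound behind (1) forbids beyond the horizon [tau]; at a point of
   small weight every margin is nonnegative, so [L <= 2 G <= 1 / eta] and [F <= 1]. *)

From HB Require Import structures.
From mathcomp Require Import all_boot all_order all_algebra.
From mathcomp Require Import all_classical all_reals.
From mathcomp Require Import all_analysis.
From mathcomp Require Import ring lra.
Import Order.TTheory GRing.Theory Num.Theory.
Local Open Scope ring_scope.
Set Implicit Arguments. Unset Strict Implicit. Unset Printing Implicit Defensive.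

Section LogitLoss.
Variable R : realType.
Implicit Types a b e h p z : R.

Definition logit_loss z : R := ln (1 + expR (- z)).

(* [logit_weight] is the derivative of [- logit_loss]. *)
Definition logit_weight z : R := (1 + expR z)^-1.

Lemma logit_weight_gt0 z : 0 < logit_weight z.
Proof. by rewrite invr_gt0; have := expR_gt0 z; lra. Qed.

Lemma logit_weight_le1 z : logit_weight z <= 1.
Proof. by rewrite invf_le1 //; have := expR_gt0 z; lra. Qed.

Lemma logit_weightE z : logit_weight z = expR (- z) / (1 + expR (- z)).
Proof.
rewrite /logit_weight expRN; have := expR_gt0 z => ez.
by field; rewrite !gt_eqF //; lra.
Qed.

Lemma logit_loss_ge0 z : 0 <= logit_loss z.
Proof. by rewrite ln_ge0 //; have := expR_gt0 (- z); lra. Qed.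

Lemma logit_loss_le_expRN z : logit_loss z <= expR (- z).
Proof. by rewrite le_ln1Dx //; have := expR_gt0 (- z); lra. Qed.

Lemma logit_weight_le_loss z : logit_weight z <= logit_loss z.
Proof.
rewrite logit_weightE /logit_loss; set u := expR (- z).
have u0 : 0 < u := expR_gt0 _.
have : -1 < - (u / (1 + u)) by rewrite ltrN2 ltr_pdivrMr; lra.
move/le_ln1Dx; have -> : 1 + - (u / (1 + u)) = (1 + u)^-1 by field; lra.
by rewrite lnV ?posrE; lra.
Qed.

Lemma expR_convex_comb p h : 0 <= p <= 1 -> expR (p * h) <= 1 - p + p * expR h.
Proof.
move=> /andP [p0 p1].
have eph := expR_gt0 (p * h); have q0 : 0 <= 1 - p by lra.
(* Average the tangent-line bounds at [- (p h)] and [(1 - p) h]. *)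
have : 1 <= (1 - p) * expR (- (p * h)) + p * expR ((1 - p) * h).
  have := ler_wpM2l q0 (expR_ge1Dx (- (p * h))).
  have := ler_wpM2l p0 (expR_ge1Dx ((1 - p) * h)).
  nra.
have eh : expR h = expR (p * h) * expR ((1 - p) * h) by rewrite -expRD; congr expR; ring.
move=> key; rewrite -(ler_pM2l eph) mulr1 in key; apply: (le_trans key).
by rewrite expRN eh le_eqVlt; apply/orP; left; apply/eqP; field; rewrite gt_eqF.
Qed.

Lemma logit_loss_convex a b : logit_weight a * (a - b) <= logit_loss b - logit_loss a.
Proof.
set p := logit_weight a.
have p0 : 0 < p := logit_weight_gt0 a; have p1 : p <= 1 := logit_weight_le1 a.
have hc := @expR_convex_comb p (a - b) (introT andP (conj (ltW p0) p1)).
have ea := expR_gt0 a; have ena := expR_gt0 (- a).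
have hid : (1 + expR (- a)) * (1 - p + p * expR (a - b)) = 1 + expR (- b).
  rewrite /p /logit_weight expRB !expRN; field.
  by rewrite !gt_eqF ?expR_gt0 //; lra.
have hpos : 0 < 1 - p + p * expR (a - b) := lt_le_trans (expR_gt0 _) hc.
move: hc; rewrite -ler_ln ?posrE ?expR_gt0 // expRK => hc.
by rewrite /logit_loss -hid lnM ?posrE //; lra.
Qed.

Lemma expR_le_quadratic z : z <= 1 -> expR z <= 1 + z + z ^+ 2.
Proof.
move=> z1; have ez := expR_gt0 z.
have [z0|z0] := lerP z 0.
  have : expR z * (1 - z) <= 1.
    have := ler_wpM2l (ltW ez) (expR_ge1Dx (- z)).
    by rewrite -expRD addrN expR0.
  have := mulr_le0_ge0 z0 (sqr_ge0 z); nra.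
pose f u : R := expR u * (1 - u + u ^+ 2).
have df (u : R) : is_derive u 1 f (expR u * (u ^+ 2 + u)).
  by apply: is_derive_eq; rewrite /GRing.scale /=; ring.
have : f 0 <= f (- z).
  apply: (@ler0_derive1_le_cc _ f (-1) 0) => //; rewrite ?in_itv /=; try lra.
  - move=> u; rewrite in_itv /= => /andP [u1 u0].
    rewrite derive1E (@derive_val _ _ _ _ _ _ _ (df u)) mulr_ge0_le0 ?expR_ge0 //.
    by rewrite (_ : u ^+ 2 + u = u * (u + 1)); [nra | ring].
  - by apply: derivable_within_continuous => u _; exact: (@ex_derive _ _ _ _ _ _ _ (df u)).
rewrite /f expR0 mul1r subr0 expr0n addr0 -(ler_pM2l ez) mulr1 mulrA -expRD.
by rewrite addrN expR0 mul1r sqrrN opprK.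
Qed.

Lemma logit_loss_descent a e : - e <= 1 ->
  logit_loss (a + e) <= logit_loss a - logit_weight a * e + logit_weight a * e ^+ 2.
Proof.
move=> e1; set p := logit_weight a.
have p0 : 0 < p := logit_weight_gt0 a; have p1 : p <= 1 := logit_weight_le1 a.
have ea := expR_gt0 a; have ena := expR_gt0 (- a); have ene := expR_gt0 (- e).
have hid : (1 + expR (- a)) * (1 + p * (expR (- e) - 1)) = 1 + expR (- (a + e)).
  rewrite /p /logit_weight opprD expRD !expRN; field.
  by rewrite !gt_eqF ?expR_gt0 //; lra.
have hq := expR_le_quadratic e1; rewrite sqrrN in hq.
have : -1 < p * (expR (- e) - 1) by have := mulr_gt0 p0 ene; lra.
move=> hp; have hl := le_ln1Dx hp.
have : p * (expR (- e) - 1) <= p * (- e + e ^+ 2) by apply: ler_wpM2l; lra.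
by rewrite /logit_loss -hid lnM ?posrE //; lra.
Qed.

Lemma ge0_logit_weight_le_half z : logit_weight z <= 2^-1 -> 0 <= z.
Proof.
have ez := expR_gt0 z.
rewrite lef_pV2 ?posrE; try lra.
by move=> h; rewrite leNgt; apply/negP; rewrite -expR_lt1; lra.
Qed.

Lemma logit_loss_le_2weight z : 0 <= z -> logit_loss z <= 2 * logit_weight z.
Proof.
move=> z0; apply: (le_trans (logit_loss_le_expRN z)).
have u0 := expR_gt0 (- z).
have : expR (- z) <= 1 by rewrite expR_le1; lra.
by rewrite logit_weightE mulrA ler_pdivlMr; nra.
Qed.

End LogitLoss.

Section Telescoping.
Variable R : realDomainType.

Lemma telescope_le (a b : nat -> R) c t :
  (forall k, a k.+1 + b k <= a k + c) -> a t + \sum_(k < t) b k <= a 0%N + t%:R * c.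
Proof.
move=> step; elim: t => [|t IH]; first by rewrite big_ord0 mul0r !addr0.
by rewrite big_ord_recr /= -natr1 mulrDl mul1r; have := step t; lra.
Qed.

Lemma natr_mul_le_sum_nonincr (f : nat -> R) t :
  (forall k, f k.+1 <= f k) -> t%:R * f t <= \sum_(k < t) f k.
Proof.
move=> dec; elim: t => [|t IH]; first by rewrite big_ord0 mul0r.
rewrite big_ord_recr /= -natr1 mulrDl mul1r.
have : t%:R * f t.+1 <= t%:R * f t by rewrite ler_wpM2l.
by have := dec t; lra.
Qed.

End Telescoping.

Section Numerics.
Variable R : realType.

Lemma max0_ln_ge0 (a : R) : 0 <= Num.max 0 (ln a).
Proof. by rewrite le_max lexx. Qed.

Lemma mulr_expRN_max0_ln_le1 (a : R) : 0 < a -> a * expR (- Num.max 0 (ln a)) <= 1.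
Proof.
move=> a0; have [a1|a1] := lerP 1 a.
  by rewrite max_r ?ln_ge0 // expRN lnK ?posrE // mulfV ?gt_eqF.
by rewrite max_l ?ln_le0 ?(ltW a1) // oppr0 expR0 mulr1 ltW.
Qed.

Lemma sqr_max0_ln_le (a : R) : Num.max 0 (ln a) ^+ 2 <= ln a ^+ 2.
Proof.
by have [_|_] := leP (ln a) 0; rewrite ?lexx // expr0n sqr_ge0.
Qed.

Lemma expR1_ge : 9 / 4 <= expR 1 :> R.
Proof.
have h0 : 0 <= 1 + 2^-1 :> R by lra.
have := ler_pM h0 h0 (expR_ge1Dx 2^-1) (expR_ge1Dx 2^-1).
by rewrite -expRD (_ : 2^-1 + 2^-1 = 1 :> R); [lra | field].
Qed.

Lemma xlnx_bound_ratio (a b M : R) : 0 < a -> 0 <= b -> expR 1 <= M ->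
  (a + b) / a * ln ((a + b) / a) <= M -> a + b <= a * M.
Proof.
move=> a0 b0 hM hr; set r := (a + b) / a in hr.
have r1 : 1 <= r by rewrite /r ler_pdivlMr // mul1r; lra.
rewrite (_ : a + b = a * r); last by rewrite /r mulrC mulfVK ?gt_eqF.
rewrite ler_pM2l //; have [re|re] := lerP (expR 1) r; last lra.
have : 1 <= ln r by rewrite -(expRK 1) ler_ln ?posrE ?expR_gt0 //; lra.
by move=> l1; apply: le_trans hr; rewrite ler_peMr //; lra.
Qed.

(* With [N = eta + m] and [A >= 30 eta M], this is the first hypothesis of
   [gd_exists_small_weight] for [g = 1 / (2 N)] and [phi = ln (1 + 16 N^2 / A)]. *)
Lemma horizon_bound (eta m M A : R) : 0 < eta -> 0 <= m -> eta <= M -> m <= M ->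
  expR 1 <= M -> (eta + m) / eta * ln ((eta + m) / eta) <= M -> 30 * eta * M <= A ->
  8 * (eta + m) * ln (1 + 16 * (eta + m) ^+ 2 / A) + 4 * (eta + m) * eta <= A.
Proof.
move=> he hm h1 h2 h3 h4 hA; set N := eta + m; set r := N / eta.
have r1 : 1 <= r by rewrite /r ler_pdivlMr // mul1r /N; lra.
have eN : N = eta * r by rewrite /r mulrC mulfVK ?gt_eqF.
have hNM : N <= eta * M := xlnx_bound_ratio he hm h3 h4.
have M0 : 0 < M by have := expR_gt0 (1 : R); lra.
have A0 : 0 < A by have := mulr_gt0 (mulr_gt0 (ltr0n R 30) he) M0; lra.
have N0 : 0 < N by rewrite /N; lra.
have hz : 16 * N ^+ 2 / A <= 16 / 15 * r.
  have h15 : 15 * eta * N <= A.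
    have : N <= 2 * M by rewrite /N; lra.
    by move=> /(ler_wpM2l (ltW he)); lra.
  rewrite ler_pdivrMr //; have := ler_wpM2l (le_trans ler01 r1) h15.
  by rewrite eN; lra.
have hln : ln (1 + 16 * N ^+ 2 / A) <= 1 + ln r.
  have z0 : 0 <= 16 * N ^+ 2 / A by rewrite divr_ge0 ?mulr_ge0 ?sqr_ge0 ?ltW.
  have : 1 + 16 * N ^+ 2 / A <= expR 1 * r.
    by have := ler_wpM2r (le_trans ler01 r1) expR1_ge; lra.
  have pz : 0 < 1 + 16 * N ^+ 2 / A by lra.
  have per : 0 < expR 1 * r by rewrite mulr_gt0 ?expR_gt0 //; lra.
  by move=> h; rewrite -ler_ln ?posrE // lnM ?posrE ?expR_gt0 // ?expRK in h; lra.
have := ler_wpM2l (ltW (mulr_gt0 (ltr0n R 8) N0)) hln.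
have : N * ln r = eta * (r * ln r) by rewrite eN mulrA.
have : eta * (r * ln r) <= eta * M by rewrite ler_pM2l.
have : N * eta <= 2 * M * eta by rewrite ler_pM2r // /N; lra.
lra.
Qed.

End Numerics.

Section DotProduct.
Variables (R : realType) (d : nat).
Implicit Types u v w : 'rV[R]_d.

Lemma dotvC u v : dotv u v = dotv v u.
Proof. by apply: eq_bigr => j _; rewrite mulrC. Qed.

Lemma dotvDl u v w : dotv (u + v) w = dotv u w + dotv v w.
Proof. by rewrite /dotv -big_split; apply: eq_bigr => j _; rewrite !mxE mulrDl. Qed.

Lemma dotvZl a u w : dotv (a *: u) w = a * dotv u w.
Proof. by rewrite /dotv mulr_sumr; apply: eq_bigr => j _; rewrite !mxE mulrA. Qed.

Lemma dotvNl u w : dotv (- u) w = - dotv u w.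
Proof. by rewrite -scaleN1r dotvZl mulN1r. Qed.

Lemma dotvBl u v w : dotv (u - v) w = dotv u w - dotv v w.
Proof. by rewrite dotvDl dotvNl. Qed.

Lemma dotv0l w : dotv 0 w = 0.
Proof. by rewrite -(scale0r 0) dotvZl mul0r. Qed.

Lemma dotv_suml I (r : seq I) (P : pred I) (f : I -> 'rV[R]_d) w :
  dotv (\sum_(i <- r | P i) f i) w = \sum_(i <- r | P i) dotv (f i) w.
Proof. by elim/big_rec2: _ => [|i a b _ <-]; rewrite ?dotv0l ?dotvDl. Qed.

Lemma dotvDr u v w : dotv w (u + v) = dotv w u + dotv w v.
Proof. by rewrite !(dotvC w) dotvDl. Qed.

Lemma dotvZr a u w : dotv w (a *: u) = a * dotv w u.
Proof. by rewrite !(dotvC w) dotvZl. Qed.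

Lemma dotvNr u w : dotv w (- u) = - dotv w u.
Proof. by rewrite !(dotvC w) dotvNl. Qed.

Lemma dotvBr u v w : dotv w (u - v) = dotv w u - dotv w v.
Proof. by rewrite !(dotvC w) dotvBl. Qed.

Lemma dotv0r w : dotv w 0 = 0.
Proof. by rewrite dotvC dotv0l. Qed.

Lemma dotv_ge0 u : 0 <= dotv u u.
Proof. by rewrite sumr_ge0 // => j _; rewrite -expr2 sqr_ge0. Qed.

Lemma dotv_eq0 u : (dotv u u == 0) = (u == 0).
Proof.
apply/idP/eqP => [|->]; last by rewrite dotv0l.
rewrite psumr_eq0 => [/allP u0|j _]; last by rewrite -expr2 sqr_ge0.
apply/rowP => j; rewrite mxE.
by have /implyP/(_ isT) := u0 j (mem_index_enum _); rewrite mulf_eq0 orbb => /eqP.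
Qed.

Lemma dotvDZ u v a :
  dotv (u + a *: v) (u + a *: v) = dotv u u + 2 * a * dotv v u + a ^+ 2 * dotv v v.
Proof. by rewrite !dotvDl !dotvDr !dotvZl !dotvZr (dotvC u v); ring. Qed.

Lemma dotv_CauchySchwarz u v : dotv u v ^+ 2 <= dotv u u * dotv v v.
Proof.
have [v0|v0] := eqVneq (dotv v v) 0.
  by move/eqP: v0; rewrite dotv_eq0 => /eqP ->; rewrite !dotv0r expr0n mulr0.
have vv0 : 0 < dotv v v by rewrite lt_def v0 dotv_ge0.
have := dotv_ge0 (dotv v v *: u - dotv u v *: v).
rewrite !dotvBl !dotvBr !dotvZl !dotvZr (dotvC v u).
nra.
Qed.

End DotProduct.

Section LogisticRisk.
Variables (R : realType) (d n : nat) (x : 'I_n -> 'rV[R]_d) (y : 'I_n -> R).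
Hypothesis n_gt0 : (0 < n)%N.
Hypothesis y_sign : forall i, y i = 1 \/ y i = -1.
Hypothesis x_norm : forall i, norm2 (x i) <= 1.

Local Notation m := (margin x y).
Local Notation L := (logistic_loss x y).
Local Notation F := (exp_loss x y).

Definition neg_grad (w : 'rV[R]_d) : 'rV[R]_d :=
  n%:R^-1 *: \sum_(i < n) (y i / (1 + expR (m w i))) *: x i.

Definition mean_weight (w : 'rV[R]_d) : R := n%:R^-1 * \sum_(i < n) logit_weight (m w i).

Local Notation V := neg_grad.
Local Notation G := mean_weight.
Implicit Types (w u z : 'rV[R]_d) (eta phi th g : R).

Lemma gdS eta t : gd x y eta t.+1 = gd x y eta t + eta *: V (gd x y eta t).
Proof. by rewrite /= /logistic_grad scalerN opprK. Qed.

Lemma logistic_lossE w : L w = n%:R^-1 * \sum_(i < n) logit_loss (m w i).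
Proof. by []. Qed.

Lemma invn_gt0 : 0 < n%:R^-1 :> R.
Proof. by rewrite invr_gt0 ltr0n. Qed.

Lemma sqr_y i : y i ^+ 2 = 1.
Proof. by case: (y_sign i) => ->; rewrite ?sqrrN expr1n. Qed.

Lemma normr_y i : `|y i| = 1.
Proof. by case: (y_sign i) => ->; rewrite ?normrN normr1. Qed.

Lemma dotv_xx_le1 i : dotv (x i) (x i) <= 1.
Proof. by have := x_norm i; rewrite /norm2 -{1}sqrtr1 ler_sqrt. Qed.

Lemma normr_dotv_x_le1 i j : `|dotv (x i) (x j)| <= 1.
Proof.
have := dotv_CauchySchwarz (x i) (x j).
have := ler_pM (dotv_ge0 _) (dotv_ge0 _) (dotv_xx_le1 i) (dotv_xx_le1 j).
rewrite mulr1 -real_normK ?num_real // => h1 h2.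
by rewrite -(expr_le1 (n := 2)) ?normr_ge0 //; apply: le_trans h1.
Qed.

Lemma dotv_neg_grad w z :
  dotv (V w) z = n%:R^-1 * \sum_(i < n) logit_weight (m w i) * (y i * dotv (x i) z).
Proof.
rewrite dotvZl dotv_suml; congr (_ * _); apply: eq_bigr => i _.
by rewrite dotvZl mulrA (mulrC _ (y i)).
Qed.

Lemma marginD w z i : m (w + z) i = m w i + y i * dotv (x i) z.
Proof. by rewrite /margin dotvDr mulrDr. Qed.

Lemma mean_weight_ge0 w : 0 <= G w.
Proof. by rewrite mulr_ge0 ?invr_ge0 ?ler0n ?sumr_ge0 // => i _; rewrite ltW ?logit_weight_gt0. Qed.

Lemma mean_weight_le1 w : G w <= 1.
Proof.
rewrite /G ler_pdivrMl ?ltr0n // mulr1.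
have -> : n%:R = \sum_(i < n) (1 : R) by rewrite sumr_const card_ord.
by apply: ler_sum => i _; apply: logit_weight_le1.
Qed.

Lemma mean_weight_le_loss w : G w <= L w.
Proof. by rewrite ler_pM2l ?invn_gt0 //; apply: ler_sum => i _; apply: logit_weight_le_loss. Qed.

Lemma loss_le_exp_loss w : L w <= F w.
Proof. by rewrite ler_pM2l ?invn_gt0 //; apply: ler_sum => i _; apply: logit_loss_le_expRN. Qed.

Lemma loss_ge0 w : 0 <= L w.
Proof. by rewrite mulr_ge0 ?invr_ge0 ?ler0n ?sumr_ge0 // => i _; apply: logit_loss_ge0. Qed.

Lemma exp_loss0 : F 0 = 1.
Proof.
rewrite /exp_loss; under eq_bigr do rewrite /margin dotv0r mulr0 oppr0 expR0.
by rewrite sumr_const card_ord mulVf // pnatr_eq0 -lt0n.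
Qed.

Lemma normr_margin_neg_grad w i : `|y i * dotv (x i) (V w)| <= G w.
Proof.
rewrite normrM normr_y mul1r dotvC dotv_neg_grad normrM ger0_norm ?invr_ge0 ?ler0n //.
rewrite ler_pM2l ?invn_gt0 //; apply: (le_trans (ler_norm_sum _ _ _)); apply: ler_sum => j _.
have p0 := ltW (logit_weight_gt0 (m w j)).
by rewrite normrM (ger0_norm p0) ler_piMr // normrM normr_y mul1r normr_dotv_x_le1.
Qed.

Lemma dotv_neg_grad_le w : dotv (V w) (V w) <= G w ^+ 2.
Proof.
rewrite {1}dotv_neg_grad expr2 {2}/G mulrCA ler_pM2l ?invn_gt0 // mulr_sumr.
apply: ler_sum => i _; rewrite mulrC; apply: ler_wpM2r; first exact/ltW/logit_weight_gt0.
exact: le_trans (ler_norm _) (normr_margin_neg_grad w i).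
Qed.

Lemma neg_grad_convex w u : dotv (V w) (w - u) <= L u - L w.
Proof.
rewrite dotv_neg_grad -mulrBr ler_pM2l ?invn_gt0 // -sumrB; apply: ler_sum => i _.
by rewrite dotvBr mulrBr; apply: logit_loss_convex.
Qed.

Lemma logit_loss_gd_step w eta i : 0 < eta -> eta * G w <= 1 ->
  logit_loss (m (w + eta *: V w) i) <= logit_loss (m w i)
    - logit_weight (m w i) * (eta * (y i * dotv (x i) (V w)))
    + logit_weight (m w i) * (eta ^+ 2 * dotv (V w) (V w)).
Proof.
move=> eta0 etaG; rewrite marginD dotvZr mulrCA.
set e := eta * (y i * dotv (x i) (V w)).
have e1 : - e <= 1.
  suff : `|e| <= 1 by rewrite ler_norml => /andP [? _]; lra.
  rewrite normrM gtr0_norm //; apply: le_trans etaG.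
  by apply: ler_wpM2l; [exact: ltW | exact: normr_margin_neg_grad].
have e2 : e ^+ 2 <= eta ^+ 2 * dotv (V w) (V w).
  rewrite exprMn ler_wpM2l ?sqr_ge0 // exprMn sqr_y mul1r.
  by apply: le_trans (dotv_CauchySchwarz _ _) _; rewrite ler_piMl ?dotv_ge0 ?dotv_xx_le1.
apply: le_trans (logit_loss_descent _ e1) _; rewrite lerD2l.
by apply: ler_wpM2l; [exact/ltW/logit_weight_gt0 | exact: e2].
Qed.

Lemma loss_gd_step w eta : 0 < eta -> eta * G w <= 1 ->
  L (w + eta *: V w) <= L w - eta * (1 - eta * G w) * dotv (V w) (V w).
Proof.
move=> eta0 etaG.
have descent_terms :
  n%:R^-1 * \sum_(i < n) logit_weight (m w i) * (eta * (y i * dotv (x i) (V w)))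
    = eta * dotv (V w) (V w).
  rewrite dotv_neg_grad [RHS]mulrCA [in RHS]mulr_sumr; congr (_ * _).
  by apply: eq_bigr => i _; rewrite mulrCA.
have curvature_terms :
  n%:R^-1 * \sum_(i < n) logit_weight (m w i) * (eta ^+ 2 * dotv (V w) (V w))
    = eta ^+ 2 * dotv (V w) (V w) * G w.
  by rewrite /mean_weight -mulr_suml; ring.
rewrite !logistic_lossE.
apply: le_trans (ler_wpM2l (ltW invn_gt0)
  (ler_sum _ (fun i _ => logit_loss_gd_step i eta0 etaG))) _.
by rewrite big_split sumrB /= mulrDr mulrBr descent_terms curvature_terms; lra.
Qed.

Lemma loss_descent w eta : 0 < eta -> eta * L w <= 1 -> L (w + eta *: V w) <= L w.
Proof.
move=> eta0 etaL.
have etaG : eta * G w <= 1.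
  by apply: le_trans etaL; apply: ler_wpM2l; [exact: ltW | exact: mean_weight_le_loss].
apply: le_trans (loss_gd_step eta0 etaG) _; rewrite gerDl oppr_le0.
by rewrite !mulr_ge0 ?dotv_ge0 ?subr_ge0 // ltW.
Qed.

Lemma dist_gd_step_stable w u eta : 0 < eta -> eta * L w <= 1 ->
  dotv (w + eta *: V w - u) (w + eta *: V w - u)
    <= dotv (w - u) (w - u) + 2 * eta * L u - eta * L w.
Proof.
move=> eta0 etaL; rewrite addrAC dotvDZ.
have etaG : eta * G w <= eta * L w.
  by apply: ler_wpM2l; [exact: ltW | exact: mean_weight_le_loss].
have etaG0 : 0 <= eta * G w by rewrite mulr_ge0 ?mean_weight_ge0 // ltW.
have : eta ^+ 2 * dotv (V w) (V w) <= eta * L w.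
  apply: le_trans (ler_wpM2l (sqr_ge0 _) (dotv_neg_grad_le w)) _.
  have etaG1 := le_trans etaG etaL.
  by rewrite -exprMn expr2; apply: le_trans etaG; exact: ler_piMl.
have := ler_wpM2l (ltW eta0) (neg_grad_convex w u); lra.
Qed.

Lemma small_weight_loss_bound w eta : 0 < eta -> G w <= (2 * (eta + n%:R))^-1 ->
  L w <= eta^-1 /\ F w <= 1.
Proof.
move=> eta0 hG.
have n0 : 0 < n%:R :> R by rewrite ltr0n.
have N0 : 0 < eta + n%:R by rewrite addr_gt0.
have weight_le_half i : logit_weight (m w i) <= 2^-1.
  have : logit_weight (m w i) <= n%:R * G w.
    rewrite mulrA mulfV ?gt_eqF // mul1r (bigD1 i) //= lerDl.
    by rewrite sumr_ge0 // => j _; apply/ltW/logit_weight_gt0.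
  move/le_trans; apply; apply: le_trans (ler_wpM2l (ltW n0) hG) _.
  by rewrite ler_pdivrMr ?mulr_gt0 //; lra.
split.
  apply: (@le_trans _ _ (2 * G w)).
    rewrite /G mulrCA ler_pM2l ?invn_gt0 // mulr_sumr; apply: ler_sum => i _.
    exact/logit_loss_le_2weight/ge0_logit_weight_le_half.
  have : 2 * G w <= (eta + n%:R)^-1.
    have e : 2 * (2 * (eta + n%:R))^-1 = (eta + n%:R)^-1 by field; rewrite gt_eqF.
    by have := ler_wpM2l (ler0n R 2) hG; rewrite e.
  by move/le_trans; apply; rewrite lef_pV2 ?posrE //; lra.
rewrite -(mulVf (lt0r_neq0 n0)) ler_pM2l ?invn_gt0 //.
have -> : n%:R = \sum_(i < n) (1 : R) by rewrite sumr_const card_ord.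
apply: ler_sum => i _; rewrite expR_le1 oppr_le0.
exact/ge0_logit_weight_le_half.
Qed.

Variables (gamma : R) (wstar : 'rV[R]_d).
Hypothesis gamma_gt0 : 0 < gamma.
Hypothesis wstar_unit : norm2 wstar = 1.
Hypothesis wstar_margin : forall i, gamma <= y i * dotv (x i) wstar.

Lemma dotv_wstar : dotv wstar wstar = 1.
Proof. by rewrite -(sqr_sqrtr (dotv_ge0 wstar)) -/(norm2 wstar) wstar_unit expr1n. Qed.

Lemma gamma_le1 : gamma <= 1.
Proof.
pose i0 := Ordinal n_gt0.
have := dotv_CauchySchwarz (x i0) wstar; rewrite dotv_wstar mulr1 => cs.
have : (y i0 * dotv (x i0) wstar) ^+ 2 <= 1.
  by rewrite exprMn sqr_y mul1r; apply: le_trans cs (dotv_xx_le1 i0).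
have := wstar_margin i0; have := gamma_gt0; nra.
Qed.

Lemma mean_weight_le_neg_grad_wstar w : gamma * G w <= dotv (V w) wstar.
Proof.
rewrite dotv_neg_grad /G mulrCA ler_pM2l ?invn_gt0 // mulr_sumr.
apply: ler_sum => i _; rewrite mulrC.
by apply: ler_wpM2l; [exact/ltW/logit_weight_gt0 | exact: wstar_margin].
Qed.

Lemma loss_shift_le w th : 0 <= th -> L (w + th *: wstar) <= expR (- (th * gamma)) * F w.
Proof.
move=> th0; rewrite mulrCA ler_pM2l ?invn_gt0 // mulr_sumr; apply: ler_sum => i _.
apply: le_trans (logit_loss_le_expRN _) _; rewrite marginD dotvZr mulrCA -expRD ler_expR.
by have := ler_wpM2l th0 (wstar_margin i); lra.
Qed.

Lemma dist_gd_step_shifted w u v eta : 0 < eta -> v = u + eta / (2 * gamma) *: wstar ->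
  dotv (w + eta *: V w - v) (w + eta *: V w - v)
    <= dotv (w - v) (w - v) + 2 * eta * (L u - L w).
Proof.
move=> eta0 ->; rewrite addrAC dotvDZ opprD addrA.
rewrite [dotv (V w) _]dotvBr [dotv (V w) (_ *: _)]dotvZr.
have := mean_weight_le_neg_grad_wstar w; set b := dotv (V w) wstar => hb.
have margin_term : eta ^+ 2 * G w <= 2 * eta * (eta / (2 * gamma) * b).
  have e1 : eta ^+ 2 / gamma * (gamma * G w) = eta ^+ 2 * G w by field; rewrite gt_eqF.
  have e2 : eta ^+ 2 / gamma * b = 2 * eta * (eta / (2 * gamma) * b).
    by field; rewrite gt_eqF.
  by rewrite -e1 -e2 ler_wpM2l ?divr_ge0 ?sqr_ge0 // ltW.
have G2 : G w ^+ 2 <= G w by rewrite expr2 ler_piMr ?mean_weight_ge0 ?mean_weight_le1.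
have := ler_wpM2l (sqr_ge0 eta) (le_trans (dotv_neg_grad_le w) G2).
have := ler_wpM2l (ltW eta0) (neg_grad_convex w u); lra.
Qed.


Section Stepsize.
Variable eta : R.
Hypothesis eta_gt0 : 0 < eta.
Local Notation w := (gd x y eta).

Lemma dotv_gd_wstar t : dotv (w t) wstar = eta * \sum_(k < t) dotv (V (w k)) wstar.
Proof.
elim: t => [|t IH]; first by rewrite big_ord0 dotv0l mulr0.
by rewrite big_ord_recr gdS dotvDl dotvZl IH mulrDr.
Qed.

Lemma gd_dist_loss_sum phi t : 0 <= phi ->
  dotv (w t - (phi + eta / 2) / gamma *: wstar) (w t - (phi + eta / 2) / gamma *: wstar)
    + 2 * eta * \sum_(k < t) L (w k)
  <= ((phi + eta / 2) / gamma) ^+ 2 + 2 * eta * t%:R * expR (- phi).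
Proof.
move=> phi0; set c := (phi + eta / 2) / gamma; set u := phi / gamma *: wstar.
have hv : c *: wstar = u + eta / (2 * gamma) *: wstar.
  by rewrite /u -scalerDl /c; congr (_ *: _); field; rewrite gt_eqF.
have Lu : L u <= expR (- phi).
  have := loss_shift_le 0 (divr_ge0 phi0 (ltW gamma_gt0)).
  by rewrite add0r exp_loss0 mulr1 mulfVK ?gt_eqF.
have step k : dotv (w k.+1 - c *: wstar) (w k.+1 - c *: wstar) + 2 * eta * L (w k)
    <= dotv (w k - c *: wstar) (w k - c *: wstar) + 2 * eta * L u.
  by rewrite gdS; have := dist_gd_step_shifted (w k) eta_gt0 hv; lra.
have := telescope_le (a := fun k => dotv (w k - c *: wstar) (w k - c *: wstar))
  (b := fun k => 2 * eta * L (w k)) t step.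
rewrite /= sub0r dotvNl dotvNr opprK dotvZl dotvZr dotv_wstar mulr1 -expr2 -mulr_sumr.
have : t%:R * (2 * eta * L u) <= t%:R * (2 * eta * expR (- phi)).
  by rewrite ler_wpM2l ?ler0n // ler_wpM2l // mulr_ge0 // ltW.
lra.
Qed.

Lemma gd_avg_loss_bound t : (1 <= t)%N ->
  t%:R^-1 * \sum_(k < t) L (w k)
    <= (1 + ln (gamma ^+ 2 * eta * t%:R) ^+ 2 + eta ^+ 2 / 4) / (gamma ^+ 2 * eta * t%:R).
Proof.
move=> t1; set a := gamma ^+ 2 * eta * t%:R; set S := \sum_(k < t) L (w k).
have t0 : 0 < t%:R :> R by rewrite ltr0n.
have a0 : 0 < a by rewrite !mulr_gt0 // exprn_gt0.
have := gd_dist_loss_sum t (max0_ln_ge0 a).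
have := mulr_expRN_max0_ln_le1 a0; have := sqr_max0_ln_le a.
set phi := Num.max 0 (ln a) => phi_ln a_phi.
have := dotv_ge0 (w t - (phi + eta / 2) / gamma *: wstar); rewrite -/S => Q0 h.
have hS : gamma ^+ 2 * (2 * eta * S) <= (phi + eta / 2) ^+ 2 + 2 * (a * expR (- phi)).
  have -> : (phi + eta / 2) ^+ 2 + 2 * (a * expR (- phi))
      = gamma ^+ 2 * (((phi + eta / 2) / gamma) ^+ 2 + 2 * eta * t%:R * expR (- phi)).
    by rewrite /a; field; rewrite gt_eqF.
  by rewrite ler_wpM2l ?sqr_ge0 //; lra.
rewrite ler_pdivlMr // (_ : t%:R^-1 * S * a = gamma ^+ 2 * eta * S); last first.
  by rewrite /a; field; rewrite gt_eqF.
by have := sqr_ge0 (phi - eta / 2); lra.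
Qed.

Lemma gd_loss_stable s : eta * L (w s) <= 1 -> forall t, (s <= t)%N -> eta * L (w t) <= 1.
Proof.
move=> hs t /subnKC <-; elim: (t - s)%N => [|j IH]; first by rewrite addn0.
rewrite addnS gdS.
exact: le_trans (ler_wpM2l (ltW eta_gt0) (loss_descent eta_gt0 IH)) IH.
Qed.

Lemma gd_loss_nonincr s : eta * L (w s) <= 1 -> forall t, (s <= t)%N -> L (w t.+1) <= L (w t).
Proof. by move=> hs t st; rewrite gdS; apply: loss_descent => //; exact: gd_loss_stable st. Qed.

Lemma gd_dist_loss_sum_stable s u j : eta * L (w s) <= 1 ->
  dotv (w (s + j) - u) (w (s + j) - u) + eta * \sum_(k < j) L (w (s + k))
    <= dotv (w s - u) (w s - u) + j%:R * (2 * eta * L u).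
Proof.
move=> hs; have step k : dotv (w (s + k.+1) - u) (w (s + k.+1) - u) + eta * L (w (s + k))
    <= dotv (w (s + k) - u) (w (s + k) - u) + 2 * eta * L u.
  rewrite addnS gdS.
  by have := dist_gd_step_stable u eta_gt0 (gd_loss_stable hs (leq_addr k s)); lra.
have := telescope_le (a := fun k => dotv (w (s + k) - u) (w (s + k) - u))
  (b := fun k => eta * L (w (s + k))) j step.
by rewrite /= addn0 -mulr_sumr.
Qed.

Lemma gd_last_loss_bound s j phi : eta * L (w s) <= 1 -> 0 <= phi ->
  gamma ^+ 2 * eta * j%:R * L (w (s + j))
    <= phi ^+ 2 + 2 * (gamma ^+ 2 * eta * j%:R) * expR (- phi) * F (w s).
Proof.
move=> hs phi0; set u := w s + phi / gamma *: wstar.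
have := gd_dist_loss_sum_stable u j hs.
have -> : w s - u = - (phi / gamma *: wstar) by rewrite /u opprD addrA subrr sub0r.
rewrite dotvNl dotvNr opprK dotvZl dotvZr dotv_wstar mulr1 => h.
have Q0 := dotv_ge0 (w (s + j) - u).
have Lu : L u <= expR (- phi) * F (w s).
  by have := loss_shift_le (w s) (divr_ge0 phi0 (ltW gamma_gt0)); rewrite mulfVK ?gt_eqF.
have mono : j%:R * L (w (s + j)) <= \sum_(k < j) L (w (s + k)).
  apply: (natr_mul_le_sum_nonincr (f := fun k => L (w (s + k)))) => k.
  by rewrite addnS; apply: gd_loss_nonincr hs _ (leq_addr k s).
have hb : eta * (j%:R * L (w (s + j)))
    <= phi / gamma * (phi / gamma) + j%:R * (2 * eta * (expR (- phi) * F (w s))).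
  have := ler_wpM2l (ltW eta_gt0) mono.
  have := ler_wpM2l (ler0n R j) (ler_wpM2l (mulr_ge0 (ler0n R 2) (ltW eta_gt0)) Lu).
  lra.
have e : gamma ^+ 2 * (phi / gamma * (phi / gamma)) = phi ^+ 2 by field; rewrite gt_eqF.
by have := ler_wpM2l (sqr_ge0 gamma) hb; rewrite mulrDr e; lra.
Qed.

Lemma gd_late_loss_bound s t : eta * L (w s) <= 1 -> (s < t)%N ->
  L (w t) <= (2 * F (w s) + ln (gamma ^+ 2 * eta * (t - s)%:R) ^+ 2)
             / (gamma ^+ 2 * eta * (t - s)%:R).
Proof.
move=> hs st; have j0 : (0 < t - s)%N by rewrite subn_gt0.
rewrite -(subnKC (ltnW st)) addKn; set j := (t - s)%N in j0 *.
set a := gamma ^+ 2 * eta * j%:R.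
have a0 : 0 < a by rewrite !mulr_gt0 ?exprn_gt0 ?ltr0n.
have F0 : 0 <= F (w s) := le_trans (loss_ge0 _) (loss_le_exp_loss _).
have := gd_last_loss_bound j hs (max0_ln_ge0 a).
have := ler_wpM2r F0 (mulr_expRN_max0_ln_le1 a0); have := sqr_max0_ln_le a.
rewrite ler_pdivlMr // -/a mulrC; lra.
Qed.

Lemma gd_exists_small_weight g phi t : 0 < g -> 0 <= phi ->
  4 * phi + 2 * eta <= gamma ^+ 2 * eta * t%:R * g ->
  4 * expR (- phi) < gamma ^+ 2 * eta * t%:R * g ^+ 2 ->
  exists k : 'I_t, G (w k) < g.
Proof.
move=> g0 phi0 hC hB.
have A0 : 0 < gamma ^+ 2 * eta * t%:R.
  have : 0 < gamma ^+ 2 * eta * t%:R * g by have := eta_gt0; lra.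
  by rewrite pmulr_lgt0.
case: (pickP (fun k : 'I_t => G (w k) < g)) => [k hk|weight_ge]; first by exists k.
exfalso; set A := gamma ^+ 2 * eta * t%:R in hC hB A0.
set c := (phi + eta / 2) / gamma; set X := dotv (w t) wstar.
have hX : eta * gamma * (t%:R * g) <= X.
  rewrite /X dotv_gd_wstar -mulrA ler_pM2l //.
  have -> : t%:R * g = \sum_(k < t) g by rewrite sumr_const card_ord mulr_natl.
  rewrite mulr_sumr; apply: ler_sum => k _; apply: le_trans (mean_weight_le_neg_grad_wstar _).
  by rewrite ler_pM2l // leNgt weight_ge.
have hXc : (X - c) ^+ 2 <= c ^+ 2 + 2 * eta * t%:R * expR (- phi).
  have := dotv_CauchySchwarz (w t - c *: wstar) wstar.
  rewrite dotv_wstar mulr1 dotvBl dotvZl dotv_wstar mulr1 -/X => cs.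
  have := gd_dist_loss_sum t phi0; rewrite -/c.
  have S0 : 0 <= \sum_(k < t) L (w k) by apply: sumr_ge0 => k _; exact: loss_ge0.
  have := mulr_ge0 (mulr_ge0 (ler0n R 2) (ltW eta_gt0)) S0.
  have := dotv_ge0 (w t - c *: wstar); lra.
(* With [Y >= P >= 4 C], [(Y - C)^2 <= C^2 + 2 A exp (- phi)] forces
   [P^2 <= 4 A exp (- phi)]. *)
pose Y := gamma * X; pose C := phi + eta / 2; pose P := A * g.
have hY : P <= Y.
  have -> : P = gamma * (eta * gamma * (t%:R * g)) by rewrite /P /A; ring.
  by rewrite ler_wpM2l // ltW.
have hYC : (Y - C) ^+ 2 <= C ^+ 2 + 2 * A * expR (- phi).
  have -> : (Y - C) ^+ 2 = gamma ^+ 2 * (X - c) ^+ 2.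
    by rewrite /Y /C /c; field; rewrite gt_eqF.
  have -> : C ^+ 2 + 2 * A * expR (- phi)
      = gamma ^+ 2 * (c ^+ 2 + 2 * eta * t%:R * expR (- phi)).
    by rewrite /C /c /A; field; rewrite gt_eqF.
  by rewrite ler_wpM2l ?sqr_ge0.
have hPB : A * (4 * expR (- phi)) < P ^+ 2 by rewrite /P exprMn expr2 -mulrA ltr_pM2l.
have C0 : 0 <= C by rewrite /C; have := ltW eta_gt0; lra.
have hP : 4 * C <= P by rewrite /P /C; lra.
have : 0 <= (Y - P) * (Y + P - 2 * C) by rewrite mulr_ge0 //; lra.
have : 0 <= (P / 4 - C) * P by rewrite mulr_ge0 //; lra.
lra.
Qed.

Lemma gd_reaches_stable_phase : exists s : nat,
  s%:R <= 60 / gamma ^+ 2 * Num.max (Num.max eta n%:R)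
     (Num.max (expR 1) ((eta + n%:R) / eta * ln ((eta + n%:R) / eta))) /\
  L (w s) <= eta^-1 /\ F (w s) <= 1.
Proof.
set M := Num.max _ _; have n0 : 0 <= n%:R :> R := ler0n _ _.
have M_eta : eta <= M by rewrite !le_max lexx.
have M_n : n%:R <= M by rewrite !le_max lexx !orbT.
have M_e : expR 1 <= M by rewrite !le_max lexx !orbT.
have M_r : (eta + n%:R) / eta * ln ((eta + n%:R) / eta) <= M by rewrite !le_max lexx !orbT.
have M94 : 9 / 4 <= M := le_trans (expR1_ge R) M_e.
have g2 : 0 < gamma ^+ 2 := exprn_gt0 _ gamma_gt0.
have g21 : gamma ^+ 2 <= 1 := exprn_ile1 _ (ltW gamma_gt0) gamma_le1.
set tau := 60 / gamma ^+ 2 * M.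
have tau_ge : 60 * M <= tau.
  have -> : tau = 60 * M / gamma ^+ 2 by rewrite /tau; field; rewrite gt_eqF.
  by rewrite ler_pdivlMr // ler_piMr // mulr_ge0 //; lra.
set t := Num.truncn tau.
have t_le : t%:R <= tau by rewrite truncn_le; lra.
have t_gt : tau < t%:R + 1 by rewrite natr1 truncnS_gt.
set A := gamma ^+ 2 * eta * t%:R.
have hA : 30 * eta * M <= A.
  have -> : 30 * eta * M = gamma ^+ 2 * eta * (tau / 2) by rewrite /tau; field; rewrite gt_eqF.
  by rewrite ler_wpM2l ?mulr_ge0 ?ltW //; lra.
have A0 : 0 < A.
  by have := mulr_gt0 (mulr_gt0 (ltr0n R 30) eta_gt0) (lt_le_trans eta_gt0 M_eta); lra.
set N := eta + n%:R.
have N0 : 0 < N by rewrite addr_gt0 // ltr0n.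
set z := 16 * N ^+ 2 / A.
have z0 : 0 <= z by rewrite divr_ge0 ?mulr_ge0 ?sqr_ge0 ?ler0n // ltW.
have [k hk] : exists k : 'I_t, G (w k) < (2 * N)^-1.
  apply: (gd_exists_small_weight (phi := ln (1 + z))); rewrite -/A.
  - by rewrite invr_gt0 mulr_gt0.
  - by rewrite ln_ge0 // lerDl.
  - rewrite ler_pdivlMr ?mulr_gt0 //.
    by have := horizon_bound eta_gt0 n0 M_eta M_n M_e M_r hA; rewrite -/N -/z; lra.
  - rewrite expRN lnK ?posrE; last lra.
    have N2 := exprn_gt0 2 N0; have D0 : 0 < A + 16 * N ^+ 2 by lra.
    rewrite -subr_gt0 (_ : _ - _ = A ^+ 2 / (4 * N ^+ 2 * (A + 16 * N ^+ 2))).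
      by apply: divr_gt0 (exprn_gt0 _ A0) _; apply: mulr_gt0; lra.
    by rewrite /z; field; rewrite !gt_eqF.
exists k; split; first by apply: le_trans t_le; rewrite ler_nat ltnW.
exact: small_weight_loss_bound eta_gt0 (ltW hk).
Qed.

End Stepsize.

End LogisticRisk.

Theorem theorem1 (R : realType) (d n : nat)
    (x : 'I_n -> 'rV[R]_d) (y : 'I_n -> R) (gamma eta : R) (wstar : 'rV[R]_d) :
  (0 < n)%N ->
  (forall i, y i = 1 \/ y i = -1) ->
  (forall i, norm2 (x i) <= 1) ->
  0 < gamma ->
  norm2 wstar = 1 ->
  (forall i, gamma <= y i * dotv (x i) wstar) ->
  0 < eta ->
  let L := logistic_loss x y in
  let F := exp_loss x y in
  let w := gd x y eta in
  (* (1) *)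
  (forall t : nat, (1 <= t)%N ->
     t%:R^-1 * \sum_(k < t) L (w k)
       <= (1 + (ln (gamma ^+ 2 * eta * t%:R)) ^+ 2 + eta ^+ 2 / 4)
          / (gamma ^+ 2 * eta * t%:R)) /\
  (* (2) *)
  (forall s : nat, L (w s) <= eta^-1 ->
     (forall t : nat, (s <= t)%N -> L (w t.+1) <= L (w t)) /\
     (forall t : nat, (s < t)%N ->
        L (w t) <= (2 * F (w s) + (ln (gamma ^+ 2 * eta * (t - s)%:R)) ^+ 2)
                   / (gamma ^+ 2 * eta * (t - s)%:R))) /\
  (* (3) *)
  (let tau := 60 / gamma ^+ 2 *
       Num.max (Num.max eta n%:R)
         (Num.max (expR 1) ((eta + n%:R) / eta * ln ((eta + n%:R) / eta))) in
   exists s : nat, s%:R <= tau /\ L (w s) <= eta^-1 /\ F (w s) <= 1).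
Proof.
move=> n_gt0 y_sign x_norm gamma_gt0 wstar_unit wstar_margin eta_gt0 L F w.
have avg := gd_avg_loss_bound n_gt0 y_sign x_norm gamma_gt0 wstar_unit wstar_margin eta_gt0.
have late := gd_late_loss_bound n_gt0 y_sign x_norm gamma_gt0 wstar_unit wstar_margin eta_gt0.
have reach := gd_reaches_stable_phase n_gt0 y_sign x_norm gamma_gt0 wstar_unit wstar_margin eta_gt0.
have nonincr := gd_loss_nonincr n_gt0 y_sign x_norm eta_gt0.
split; first exact avg.
split; last exact reach.
move=> s hs; have stable : eta * L (w s) <= 1 by rewrite -ler_pdivlMl // mulr1.
by split; [exact (nonincr s stable) | exact (late s ^~ stable)].
Qed.
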